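(* In the static load balancing game described in the context, fix a player $i$ and the actions $a_{-i}$ of the other players. Suppose the servers are labeled so that $\hat{\mu}_{i1}\ge \hat{\mu}_{i2}\ge\cdots\ge\hat{\mu}_{im}$. Then the optimal solution of the convex program $$\min_{a_i}\ D_i(a)\quad\text{s.t.}\quad \sum_{j=1}^m a_{ij}=1,\ a_{ij}\ge 0\ \ \forall j\in[m]$$ is given by $$a_{ij}=\begin{cases}\dfrac{\mu_j}{\lambda_i}\left(\dfrac{\lambda_i+\sum_{k=1}^{c_i-1}\frac{\mu_k}{\hat{\mu}_{ik}}}{\sum_{k=1}^{c_i-1}\mu_k}-\dfrac{1}{\hat{\mu}_{ij}}\right), & 1\le j<c_i,\\[2mm] 0, & c_i\le j\le m,\end{cases}$$ where $c_i$ is the smallest integer index satisfying $$\hat{\mu}_{ic_i}\left(\lambda_i+\sum_{k=1}^{c_i-1}\frac{\mu_k}{\hat{\mu}_{ik}}\right)\le \sum_{k=1}^{c_i-1}\mu_k,$$ with $c_i=m+1$ if no index in $\{1,\dots,m\}$ satisfies this inequality.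
   Context: Static load balancing game: there are $m$ servers with service rates $\mu_j>0$ and initial loads $s_j^0\ge0$, and $n$ players; player $i$ holds a job of length $\lambda_i>0$. Player $i$'s action is $a_i=(a_{i1},\dots,a_{im})$ in the probability simplex, $a_{ij}$ being the fraction of job $i$ placed on server $j$. The cost of player $i$ under profile $a$ is $$D_i(a)=\sum_{j=1}^m \lambda_i a_{ij}\left(\frac{\lambda_i a_{ij}}{2\mu_j}+\frac{s_j^0+\sum_{k\neq i}\lambda_k a_{kj}}{\mu_j}\right).$$ The relative available processing rate of server $j$ as viewed by player $i$ is $\hat{\mu}_{ij}=\dfrac{\mu_j}{s_j^0+\sum_{k\ne i}\lambda_k a_{kj}}$ (taken to be $+\infty$ when the denominator is $0$, in which case $1/\hat{\mu}_{ij}=0$). *)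

(* extended reals from mathcomp-analysis' constructive_ereal
   are used only to represent hat-mu, which may be +oo. *)
From HB Require Import structures.
From mathcomp Require Import all_boot all_order all_algebra.
From mathcomp Require Import constructive_ereal.
Set Implicit Arguments. Unset Strict Implicit. Unset Printing Implicit Defensive.
Import Order.TTheory GRing.Theory Num.Theory.
Local Open Scope ring_scope.

(* Servers are 'I_m (0-based), players are 'I_n.
   mu j : service rate, s j : initial load s_j^0, lam k : job length,
   a k j : fraction of job k on server j (profile). *)

Definition others_load (R : realFieldType) (n m : nat)
  (lam : 'I_n -> R) (s : 'I_m -> R) (a : 'I_n -> 'I_m -> R) (i : 'I_n)
  (j : 'I_m) : R :=
  s j + \sum_(k < n | k != i) lam k * a k j.

(* 1 / hat-mu_{ij}  (= 0 when the denominator of hat-mu is 0) *)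
Definition inv_hat_mu (R : realFieldType) (n m : nat)
  (lam : 'I_n -> R) (mu s : 'I_m -> R) (a : 'I_n -> 'I_m -> R) (i : 'I_n)
  (j : 'I_m) : R :=
  others_load lam s a i j / mu j.

Definition hat_mu (R : realFieldType) (n m : nat)
  (lam : 'I_n -> R) (mu s : 'I_m -> R) (a : 'I_n -> 'I_m -> R) (i : 'I_n)
  (j : 'I_m) : \bar R :=
  if others_load lam s a i j == 0 then +oo%E
  else (mu j / others_load lam s a i j)%:E.

(* D_i(a) where player i uses action b and the others use a *)
Definition cost (R : realFieldType) (n m : nat)
  (lam : 'I_n -> R) (mu s : 'I_m -> R) (a : 'I_n -> 'I_m -> R) (i : 'I_n)
  (b : 'I_m -> R) : R :=
  \sum_(j < m) lam i * b j *
     (lam i * b j / (2 * mu j) + others_load lam s a i j / mu j).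

Definition in_simplex (R : realFieldType) (m : nat) (b : 'I_m -> R) : Prop :=
  (forall j, 0 <= b j) /\ \sum_(j < m) b j = 1.

Definition threshold_cond (R : realFieldType) (n m : nat)
  (lam : 'I_n -> R) (mu s : 'I_m -> R) (a : 'I_n -> 'I_m -> R) (i : 'I_n)
  (c : 'I_m) : Prop :=
  (hat_mu lam mu s a i c *
     (lam i + \sum_(k < m | (k < c)%N) mu k * inv_hat_mu lam mu s a i k)%:E
   <= (\sum_(k < m | (k < c)%N) mu k)%:E)%E.

(* The closed-form best response, with c the 0-based version of c_i - 1
   (servers j with j < c get positive share). *)
Definition best_response (R : realFieldType) (n m : nat)
  (lam : 'I_n -> R) (mu s : 'I_m -> R) (a : 'I_n -> 'I_m -> R) (i : 'I_n)
  (c : nat) (j : 'I_m) : R :=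
  if (j < c)%N then
    mu j / lam i *
      ((lam i + \sum_(k < m | (k < c)%N) mu k * inv_hat_mu lam mu s a i k)
         / (\sum_(k < m | (k < c)%N) mu k)
       - inv_hat_mu lam mu s a i j)
  else 0.

(** The cost of player i is separable: server j contributes the convex
    quadratic λ t (λ t / (2 μ_j) + x_j) in its share t, where x_j = 1/μ̂_ij.
    The closed form is a water-filling point: with the water level
    T = (λ + Σ_{k<c} μ_k x_k) / Σ_{k<c} μ_k, every used server has marginal cost
    λ T and every unused one has marginal cost λ x_j ≥ λ T.  Expanding each
    quadratic around this point, the linear terms sum to λ T Σ_j (b_j - a*_j) = 0
    over the simplex, so the cost of any feasible b exceeds the optimum by
    Σ_j λ² (b_j - a*_j)² / (2 μ_j), which gives optimality and uniqueness.  The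
    minimality of c_i is exactly what places x_j below T for j < c_i and above
    T for j ≥ c_i, once the servers are sorted. *)

From HB Require Import structures.
From mathcomp Require Import all_boot all_order all_algebra.
From mathcomp Require Import constructive_ereal ring lra.
From Stdlib Require Import FunctionalExtensionality.
Set Implicit Arguments. Unset Strict Implicit. Unset Printing Implicit Defensive.
Import Order.TTheory GRing.Theory Num.Theory.
Local Open Scope ring_scope.

Lemma sum_ord_ltS (V : nmodType) (m : nat) (F : 'I_m -> V) (p : 'I_m) :
  \sum_(k < m | (k < p.+1)%N) F k = F p + \sum_(k < m | (k < p)%N) F k.
Proof.
rewrite (bigD1 p) //=; congr (_ + _); apply: eq_bigl => k /=.
by rewrite ltnS [(k < p)%N]ltn_neqAle andbC -val_eqE.
Qed.

Definition load_cost (R : realFieldType) (l mu x t : R) : R :=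
  l * t * (l * t / (2 * mu) + x).

Lemma load_cost_expand (R : realFieldType) (l mu x u t : R) : mu != 0 ->
  load_cost l mu x t = load_cost l mu x u + l * (l * u / mu + x) * (t - u)
                       + l ^+ 2 * (t - u) ^+ 2 / (2 * mu).
Proof. by move=> mu0; rewrite /load_cost; field. Qed.

Section SeparableQuadratic.

Variables (R : realFieldType) (m : nat) (l : R) (mu x : 'I_m -> R).
Hypotheses (l_gt0 : 0 < l) (mu_gt0 : forall j, 0 < mu j).

Definition sep_cost (b : 'I_m -> R) : R :=
  \sum_(j < m) load_cost l (mu j) (x j) (b j).

Definition sq_gap (b u : 'I_m -> R) (j : 'I_m) : R :=
  l ^+ 2 * (b j - u j) ^+ 2 / (2 * mu j).

Lemma sq_gap_ge0 b u j : 0 <= sq_gap b u j.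
Proof.
by rewrite /sq_gap divr_ge0 ?(mulr_ge0 (sqr_ge0 _) (sqr_ge0 _)) ?mulr_ge0 // ltW.
Qed.

Lemma sq_gap_eq0 b u j : sq_gap b u j = 0 -> b j = u j.
Proof.
rewrite /sq_gap => /eqP; rewrite !mulf_eq0 invr_eq0 mulf_eq0 pnatr_eq0.
rewrite (negbTE (lt0r_neq0 l_gt0)) (negbTE (lt0r_neq0 (mu_gt0 j))) /=.
by rewrite !orbF orbb subr_eq0 => /eqP.
Qed.

Variables (u : 'I_m -> R) (T : R).
Hypotheses (u_simplex : in_simplex u)
  (u_level : forall j, u j = mu j / l * (T - x j) \/ u j = 0 /\ T <= x j).

Lemma load_cost_ge_tangent j t : 0 <= t ->
  load_cost l (mu j) (x j) (u j) + l * T * (t - u j)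
    + l ^+ 2 * (t - u j) ^+ 2 / (2 * mu j)
  <= load_cost l (mu j) (x j) t.
Proof.
move=> t_ge0; rewrite [leRHS](load_cost_expand l (x j) (u j)) ?lt0r_neq0 //.
rewrite lerD2r lerD2l; case: (u_level j) => [->|[-> leTx]].
  have slope_eq : l * (l * (mu j / l * (T - x j)) / mu j + x j) = l * T.
    by field; rewrite !lt0r_neq0.
  by rewrite slope_eq lexx.
by rewrite mulr0 mul0r add0r subr0 ler_wpM2r // ler_wpM2l // ltW.
Qed.

Lemma sep_cost_gap b : in_simplex b ->
  sep_cost u + \sum_(j < m) sq_gap b u j <= sep_cost b.
Proof.
move=> [b_ge0 b_sum1].
have linear_terms_vanish : \sum_(j < m) l * T * (b j - u j) = 0.
  by rewrite -mulr_sumr sumrB b_sum1 u_simplex.2 subrr mulr0.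
have -> : sep_cost u + \sum_(j < m) sq_gap b u j = \sum_(j < m)
    (load_cost l (mu j) (x j) (u j) + l * T * (b j - u j) + sq_gap b u j).
  by rewrite !big_split /= linear_terms_vanish addr0.
by apply: ler_sum => j _; exact: load_cost_ge_tangent.
Qed.

Lemma sep_cost_min b : in_simplex b -> sep_cost u <= sep_cost b.
Proof.
move=> b_simplex; apply: le_trans (sep_cost_gap b_simplex).
by rewrite lerDl sumr_ge0 // => j _; exact: sq_gap_ge0.
Qed.

Lemma sep_cost_min_unique b : in_simplex b -> sep_cost b <= sep_cost u -> b = u.
Proof.
move=> b_simplex le_bu.
have gap0 : \sum_(j < m) sq_gap b u j = 0.
  apply/eqP; rewrite eq_le sumr_ge0 ?andbT => [|j _]; last exact: sq_gap_ge0.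
  by have := sep_cost_gap b_simplex; lra.
apply: functional_extensionality => j; apply: sq_gap_eq0.
exact: (psumr_eq0P (P := predT) (fun j _ => sq_gap_ge0 b u j) gap0).
Qed.

End SeparableQuadratic.

Section BestResponse.

Variables (R : realFieldType) (n m : nat) (mu s : 'I_m -> R) (lam : 'I_n -> R)
  (a : 'I_n -> 'I_m -> R) (i : 'I_n).
Hypotheses (mu_gt0 : forall j, 0 < mu j) (s_ge0 : forall j, 0 <= s j)
  (lam_gt0 : forall k, 0 < lam k)
  (a_simplex : forall k, k != i -> in_simplex (a k))
  (hat_mu_sorted : forall j1 j2 : 'I_m, (j1 <= j2)%N ->
     (hat_mu lam mu s a i j2 <= hat_mu lam mu s a i j1)%E).

Local Notation L := (others_load lam s a i).
Local Notation x := (inv_hat_mu lam mu s a i).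
Local Notation mu_below c := (\sum_(k < m | (k < c)%N) mu k).
Local Notation mux_below c := (\sum_(k < m | (k < c)%N) mu k * x k).

Lemma others_load_ge0 j : 0 <= L j.
Proof.
rewrite /others_load addr_ge0 // sumr_ge0 // => k ki.
by rewrite mulr_ge0 ?(a_simplex ki).1 // ltW.
Qed.

Lemma inv_hat_mu_ge0 j : 0 <= x j.
Proof. by rewrite /inv_hat_mu divr_ge0 ?others_load_ge0 ?ltW. Qed.

Lemma inv_hat_mu_sorted (j1 j2 : 'I_m) : (j1 <= j2)%N -> x j1 <= x j2.
Proof.
move/hat_mu_sorted; rewrite /hat_mu /inv_hat_mu.
have [->|L2] := eqVneq (L j2) 0.
  by case: eqP => [->|_]; rewrite ?mul0r // leye_eq.
have [->|L1] := eqVneq (L j1) 0.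
  by move=> _; rewrite mul0r divr_ge0 ?others_load_ge0 ?ltW.
have L1_gt0 : 0 < L j1 by rewrite lt_def L1 others_load_ge0.
have L2_gt0 : 0 < L j2 by rewrite lt_def L2 others_load_ge0.
rewrite lee_fin -[leLHS]invf_div -[leRHS]invf_div.
by rewrite lef_pV2 // posrE divr_gt0.
Qed.

Lemma hat_mu_mul_leE j (A B : R) : 0 < A ->
  (hat_mu lam mu s a i j * A%:E <= B%:E)%E <-> A <= x j * B.
Proof.
move=> A_gt0; rewrite /hat_mu /inv_hat_mu; have [->|L0] := eqVneq (L j) 0.
  rewrite gt0_mulye ?lte_fin // leye_eq !mul0r; split=> // A_le0.
  by move: (lt_le_trans A_gt0 A_le0); rewrite ltxx.
have L_gt0 : 0 < L j by rewrite lt_def L0 others_load_ge0.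
by rewrite -EFinM lee_fin -ler_pdivlMl ?divr_gt0 // invf_div.
Qed.

Lemma threshold_condE j :
  threshold_cond lam mu s a i j <-> lam i + mux_below j <= x j * mu_below j.
Proof.
apply: hat_mu_mul_leE; rewrite ltr_wpDr // sumr_ge0 // => k _.
by rewrite mulr_ge0 ?inv_hat_mu_ge0 ?ltW.
Qed.

Variable c : nat.
Hypotheses (m_gt0 : (0 < m)%N) (c_le_m : (c <= m)%N)
  (not_threshold_below : forall j : 'I_m, (j < c)%N -> ~ threshold_cond lam mu s a i j)
  (threshold_at : forall j : 'I_m, nat_of_ord j = c -> threshold_cond lam mu s a i j).

Lemma threshold_gt0 : (0 < c)%N.
Proof.
case: c threshold_at => // /(_ (Ordinal m_gt0) erefl).
rewrite threshold_condE !big_pred0 // mulr0 addr0.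
by have := lam_gt0 i; lra.
Qed.

Let last_used_lt_m : (c.-1 < m)%N.
Proof. by rewrite prednK // threshold_gt0. Qed.

Let last_used : 'I_m := Ordinal last_used_lt_m.
Let c_eq : c = last_used.+1.
Proof. by rewrite /= prednK // threshold_gt0. Qed.

Definition level := (lam i + mux_below c) / mu_below c.

Lemma mu_below_gt0 : 0 < mu_below c.
Proof.
rewrite c_eq sum_ord_ltS ltr_wpDr ?mu_gt0 // sumr_ge0 // => k _.
exact: ltW.
Qed.

Lemma inv_hat_mu_lt_level (j : 'I_m) : (j < c)%N -> x j < level.
Proof.
move=> j_lt_c.
have last_below : x last_used * mu_below last_used < lam i + mux_below last_used.
  rewrite ltNge; apply/negP => /threshold_condE; apply: not_threshold_below.
  by rewrite c_eq.
apply: (le_lt_trans (inv_hat_mu_sorted (_ : (j <= last_used)%N))).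
  by rewrite -ltnS -c_eq.
rewrite /level ltr_pdivlMr ?mu_below_gt0 // c_eq !sum_ord_ltS.
by lra.
Qed.

Lemma level_le_inv_hat_mu (j : 'I_m) : (c <= j)%N -> level <= x j.
Proof.
move=> c_le_j; have c_lt_m : (c < m)%N by apply: leq_ltn_trans c_le_j _.
have /threshold_condE := @threshold_at (Ordinal c_lt_m) erefl.
rewrite -ler_pdivrMr ?mu_below_gt0 // => le_level.
exact: le_trans le_level (inv_hat_mu_sorted (j1 := Ordinal c_lt_m) c_le_j).
Qed.

Local Notation br := (best_response lam mu s a i c).

Lemma best_response_level j :
  br j = mu j / lam i * (level - x j) \/ br j = 0 /\ level <= x j.
Proof.
rewrite /best_response; case: ltnP => [_|c_le_j]; first by left.
by right; split => //; exact: level_le_inv_hat_mu.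
Qed.

Lemma best_response_simplex : in_simplex br.
Proof.
have lam_neq0 : lam i != 0 by rewrite lt0r_neq0.
split=> [j|].
  rewrite /best_response; case: ltnP => // j_lt_c.
  by rewrite mulr_ge0 ?divr_ge0 ?subr_ge0 ?ltW ?inv_hat_mu_lt_level.
rewrite -big_mkcond /=.
have -> : \sum_(j < m | (j < c)%N) mu j / lam i * (level - x j)
        = (level * mu_below c - mux_below c) / lam i.
  by rewrite mulr_sumr -sumrB mulr_suml; apply: eq_bigr => j _; field.
by rewrite /level; field; rewrite lam_neq0 lt0r_neq0 ?mu_below_gt0.
Qed.

End BestResponse.

Theorem lemma1 (R : realFieldType) (n m : nat)
  (mu s : 'I_m -> R) (lam : 'I_n -> R) (a : 'I_n -> 'I_m -> R) (i : 'I_n)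
  (c : nat) :
  (0 < m)%N ->
  (forall j, 0 < mu j) ->
  (forall j, 0 <= s j) ->
  (forall k, 0 < lam k) ->
  (forall k, k != i -> in_simplex (a k)) ->
  (* servers labeled so that hat-mu_{i1} >= ... >= hat-mu_{im} *)
  (forall j1 j2 : 'I_m, (j1 <= j2)%N ->
     (hat_mu lam mu s a i j2 <= hat_mu lam mu s a i j1)%E) ->
  (* c (0-based, in 0..m) is the smallest index satisfying the threshold
     inequality, or m if none does *)
  (c <= m)%N ->
  (forall j : 'I_m, (j < c)%N -> ~ threshold_cond lam mu s a i j) ->
  (forall j : 'I_m, nat_of_ord j = c -> threshold_cond lam mu s a i j) ->
  (* the closed form is the (unique) optimal solution *)
  in_simplex (best_response lam mu s a i c) /\
  (forall b, in_simplex b ->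
     cost lam mu s a i (best_response lam mu s a i c) <= cost lam mu s a i b) /\
  (forall b, in_simplex b ->
     cost lam mu s a i b <= cost lam mu s a i (best_response lam mu s a i c) ->
     b = best_response lam mu s a i c).
Proof.
move=> m_gt0 mu_gt0 s_ge0 lam_gt0 a_simplex sorted c_le_m below at_c.
have br_simplex := best_response_simplex mu_gt0 s_ge0 lam_gt0 a_simplex sorted
  m_gt0 c_le_m below at_c.
have br_level := best_response_level mu_gt0 s_ge0 lam_gt0 a_simplex sorted
  m_gt0 c_le_m at_c.
split; first exact: br_simplex.
split=> b b_simplex.
  exact: (sep_cost_min (lam_gt0 i) mu_gt0 br_simplex br_level b_simplex).
exact: (sep_cost_min_unique (lam_gt0 i) mu_gt0 br_simplex br_level b_simplex).
Qed.
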